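(* Consider a finite reward-free MDP with occupancy polytope $\Phi$ and a dataset $\mathcal D=\{(d_e^k,\epsilon^k)\}_{k=1}^K$ with $d_e^k\in\Phi$, $\epsilon^k\ge0$. Let $\mathcal P\subseteq[K]\times[K]$ and margins $\epsilon_{ij}\ge0$ for $(i,j)\in\mathcal P$, and let \[\mathcal R_{\mathcal P}:=\{r\in\mathcal R(\mathcal D): r^\top(d_e^i-d_e^j)\ge\epsilon_{ij}\ \forall(i,j)\in\mathcal P\}.\] Let $\mathcal G$ be the directed graph with vertex set $[K]$ and edge set $\mathcal P$. For any simple directed path $p=(i_0\to i_1\to\cdots\to i_m)$ in $\mathcal G$, with $\epsilon(p):=\sum_{\ell=1}^m\epsilon_{i_{\ell-1}i_\ell}$, if $\mathcal R_{\mathcal P}\ne\emptyset$ then $\mathrm{rng}(\mathcal R_{\mathcal P})\ge\epsilon(p)$.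
   Context: The MDP has finite $S$, $A$, transitions $P$, initial distribution $\mu_0$, discount $\gamma\in(0,1)$; $(Md)(s)=\sum_a d(s,a)-\gamma\sum_{s',a'}P(s\mid s',a')d(s',a')$ and $\Phi=\{d\ge0:Md=(1-\gamma)\mu_0\}$. Rewards are $r\in\Delta(S\times A)$. $\mathrm{subopt}(r,d):=\max_{\tilde d\in\Phi}r^\top\tilde d-r^\top d$; $\mathcal R(\mathcal D):=\{r\in\Delta(S\times A):\mathrm{subopt}(r,d_e^k)\le\epsilon^k\ \forall k\}$. For a set of rewards $\mathcal R$, $\mathrm{rng}(\mathcal R):=\min_{r\in\mathcal R}\big(\max_{\tilde d\in\Phi}r^\top\tilde d-\min_{d\in\Phi}r^\top d\big)$. *)

From HB Require Import structures.
From mathcomp Require Import all_boot all_order all_algebra.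
From mathcomp Require Import classical_sets reals.
Set Implicit Arguments. Unset Strict Implicit. Unset Printing Implicit Defensive.
Import Order.TTheory GRing.Theory Num.Theory.
Local Open Scope ring_scope.
Local Open Scope classical_set_scope.

Section MDP.
Variables (R : realType) (S A : finType).
(* Ptr s s' a = P(s | s', a) *)
Variables (Ptr : S -> S -> A -> R) (mu0 : S -> R) (gamma : R).

Definition inner (r d : S -> A -> R) : R := \sum_(s : S) \sum_(a : A) r s a * d s a.

Definition Mop (d : S -> A -> R) (s : S) : R :=
  \sum_(a : A) d s a - gamma * \sum_(s' : S) \sum_(a' : A) Ptr s s' a' * d s' a'.

Definition Phi : set (S -> A -> R) :=
  [set d | (forall s a, 0 <= d s a) /\ (forall s, Mop d s = (1 - gamma) * mu0 s)].

Definition simplexSA : set (S -> A -> R) :=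
  [set r | (forall s a, 0 <= r s a) /\ \sum_(s : S) \sum_(a : A) r s a = 1].

Definition maxval (r : S -> A -> R) : R := sup [set inner r d | d in Phi].
Definition minval (r : S -> A -> R) : R := inf [set inner r d | d in Phi].

Definition subopt (r d : S -> A -> R) : R := maxval r - inner r d.

Definition feasR (K : nat) (de : 'I_K -> S -> A -> R) (eps : 'I_K -> R)
  : set (S -> A -> R) :=
  [set r | simplexSA r /\ forall k, subopt r (de k) <= eps k].

Definition rng (Rset : set (S -> A -> R)) : R :=
  inf [set maxval r - minval r | r in Rset].

Definition feasRP (K : nat) (de : 'I_K -> S -> A -> R) (eps : 'I_K -> R)
  (Pset : rel 'I_K) (epsij : 'I_K -> 'I_K -> R) : set (S -> A -> R) :=
  [set r | feasR de eps r /\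
     forall i j, Pset i j -> epsij i j <= inner r (fun s a => de i s a - de j s a)].
End MDP.

(* epsilon(p) for the path i0 -> p_1 -> ... -> p_m *)
Definition path_eps (R : realType) (K : nat) (epsij : 'I_K -> 'I_K -> R)
  (i0 : 'I_K) (p : seq 'I_K) : R :=
  \sum_(x <- pairmap epsij i0 p) x.

From HB Require Import structures.
From mathcomp Require Import all_boot all_order all_algebra.
From mathcomp Require Import classical_sets reals.
Set Implicit Arguments. Unset Strict Implicit. Unset Printing Implicit Defensive.
Import Order.TTheory GRing.Theory Num.Theory.
Local Open Scope ring_scope.
Local Open Scope classical_set_scope.

(* Along a path i0 -> ... -> im of preference edges every feasible reward
   satisfies r.d_e^(i_(l-1)) - r.d_e^(i_l) >= eps_(i_(l-1) i_l), and these
   differences telescope to r.d_e^i0 - r.d_e^im.  Since r lies in the simplex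
   and occupancy measures are probability distributions, r.d takes values in
   [0, 1] on Phi; this boundedness makes the sup and inf defining max_Phi r.d
   and min_Phi r.d meaningful, so r.d_e^i0 <= max_Phi r.d, r.d_e^im >= min_Phi r.d:
   every r in R_P has range at least eps(p), hence so does their infimum. *)

Section Telescoping.
Variables (R : realType) (K : nat) (Pset : rel 'I_K) (epsij : 'I_K -> 'I_K -> R).
Variable f : 'I_K -> R.
Hypothesis margin : forall i j, Pset i j -> epsij i j <= f i - f j.

Lemma path_eps_le_telescope i q :
  path Pset i q -> path_eps epsij i q <= f i - f (last i q).
Proof.
elim: q i => [|j q IHq] i /=; first by rewrite /path_eps big_nil subrr.
case/andP=> Pij path_jq.
rewrite /path_eps big_cons -/(path_eps epsij j q).
by rewrite -[leRHS](subrKA (f j)) lerD ?margin ?IHq.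
Qed.

End Telescoping.

Section InnerProduct.
Variables (R : realType) (S A : finType).
Implicit Types r d : S -> A -> R.

Lemma inner_subr r d1 d2 :
  inner r (fun s a => d1 s a - d2 s a) = inner r d1 - inner r d2.
Proof.
rewrite /inner -sumrB; apply: eq_bigr => s _.
by rewrite -sumrB; apply: eq_bigr => a _; rewrite mulrBr.
Qed.

Lemma simplexSA_le1 r s a : simplexSA r -> r s a <= 1.
Proof.
case=> r_ge0 <-; rewrite (bigD1 s) //= (bigD1 a) //= -addrA lerDl.
by rewrite addr_ge0 ?sumr_ge0 // => *; rewrite ?sumr_ge0.
Qed.

Lemma inner_simplex_ge0 r d :
  simplexSA r -> (forall s a, 0 <= d s a) -> 0 <= inner r d.
Proof.
by case=> r_ge0 _ d_ge0; do 2![apply: sumr_ge0 => * ]; rewrite mulr_ge0.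
Qed.

Lemma inner_simplex_le1 r d : simplexSA r -> (forall s a, 0 <= d s a) ->
  \sum_s \sum_a d s a = 1 -> inner r d <= 1.
Proof.
move=> r_simplex d_ge0 <-; do 2![apply: ler_sum => * ].
by rewrite ler_piMl ?simplexSA_le1.
Qed.

End InnerProduct.

Section Occupancy.
Variables (R : realType) (S A : finType).
Variables (Ptr : S -> S -> A -> R) (mu0 : S -> R) (gamma : R).
Hypothesis gamma_neq1 : gamma != 1.
Hypothesis Ptr_sum1 : forall s' a, \sum_s Ptr s s' a = 1.
Hypothesis mu0_sum1 : \sum_s mu0 s = 1.
Implicit Types r d : S -> A -> R.

Lemma sum_Mop d :
  \sum_s Mop Ptr gamma d s = (1 - gamma) * \sum_s \sum_a d s a.
Proof.
rewrite /Mop sumrB -mulr_sumr mulrBl mul1r; congr (_ - gamma * _).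
rewrite exchange_big /=; apply: eq_bigr => s' _.
rewrite exchange_big /=; apply: eq_bigr => a' _.
by rewrite -mulr_suml Ptr_sum1 mul1r.
Qed.

Lemma Phi_mass1 d : Phi Ptr mu0 gamma d -> \sum_s \sum_a d s a = 1.
Proof.
case=> _ Md; have gamma_neq1' : 1 - gamma != 0 by rewrite subr_eq0 eq_sym.
apply: (mulfI gamma_neq1'); rewrite -sum_Mop mulr1.
by under eq_bigr do rewrite Md; rewrite -mulr_sumr mu0_sum1 mulr1.
Qed.

Lemma inner_le_maxval r d :
  simplexSA r -> Phi Ptr mu0 gamma d -> inner r d <= maxval Ptr mu0 gamma r.
Proof.
move=> r_simplex Phi_d; apply: sup_upper_bound; last by exists d.
split; first by exists (inner r d), d.
exists 1 => _ [d' Phi_d' <-]; have [d'_ge0 _] := Phi_d'.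
by rewrite inner_simplex_le1 ?Phi_mass1.
Qed.

Lemma minval_le_inner r d :
  simplexSA r -> Phi Ptr mu0 gamma d -> minval Ptr mu0 gamma r <= inner r d.
Proof.
move=> r_simplex Phi_d; apply: ge_inf; last by exists d.
by exists 0 => _ [d' [d'_ge0 _] <-]; rewrite inner_simplex_ge0.
Qed.

End Occupancy.

Theorem mainTheorem11 (R : realType) (S A : finType)
  (Ptr : S -> S -> A -> R) (mu0 : S -> R) (gamma : R)
  (hgamma : 0 < gamma < 1)
  (hP0 : forall s s' a, 0 <= Ptr s s' a)
  (hP1 : forall s' a, \sum_(s : S) Ptr s s' a = 1)
  (hmu0 : forall s, 0 <= mu0 s) (hmu1 : \sum_(s : S) mu0 s = 1)
  (K : nat) (de : 'I_K -> S -> A -> R) (eps : 'I_K -> R)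
  (hde : forall k, Phi Ptr mu0 gamma (de k))
  (heps : forall k, 0 <= eps k)
  (Pset : rel 'I_K) (epsij : 'I_K -> 'I_K -> R)
  (hepsij : forall i j, Pset i j -> 0 <= epsij i j)
  (i0 : 'I_K) (p : seq 'I_K)
  (hpath : path Pset i0 p) (hsimple : uniq (i0 :: p))
  (hne : feasRP Ptr mu0 gamma de eps Pset epsij !=set0) :
  path_eps epsij i0 p <= rng Ptr mu0 gamma (feasRP Ptr mu0 gamma de eps Pset epsij).
Proof.
have gamma_neq1 : gamma != 1 by case/andP: hgamma => _ /lt_eqF ->.
apply: lb_le_inf.
  by case: hne => r RP_r; exists (maxval Ptr mu0 gamma r - minval Ptr mu0 gamma r), r.
move=> _ [r [[r_simplex _] r_margins] <-].
have margin i j : Pset i j -> epsij i j <= inner r (de i) - inner r (de j).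
  by move/r_margins; rewrite inner_subr.
apply: (le_trans (path_eps_le_telescope (f := fun k => inner r (de k)) margin hpath)).
by rewrite lerB ?inner_le_maxval ?minval_le_inner.
Qed.
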